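(* Let $P$ be a $d$-dimensional convex polytope with vertex $x$, and let $T$ be a face of $P$ containing $x$. Let $P'$ be $P$ truncated at $T$, and let $F$ be the facet of $P'$ that is entirely contained in the boundary hyperplane of the halfspace used for the truncation. Let $w$ be a vertex of $P$ adjacent to $x$ (in the graph of $P$) and not contained in $T$, and let $v$ be the vertex of $P'$ contained in $F$ and adjacent to $w$ (with $w$ regarded as a vertex of $P'$). If $P$ is simple at $w$, then $P'$ is simple at $v$.
   Context: For a polytope $P$ and face $T$, ''$P$ truncated at $T$'' is the polytope obtained by intersecting $P$ with a closed halfspace which contains no vertex of $T$ and whose interior contains all vertices of $P$ not in $T$. A $d$-dimensional polytope is simple at a vertex $v$ if $v$ has degree $d$ in the graph of the polytope (graph: vertices of the polytope, adjacent iff they lie on a common $1$-dimensional face). *)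

From HB Require Import structures.
From mathcomp Require Import all_boot all_order all_algebra.
Set Implicit Arguments. Unset Strict Implicit. Unset Printing Implicit Defensive.
Import Order.TTheory GRing.Theory Num.Theory.
Local Open Scope ring_scope.

Section Polytopes.
Variables (R : realFieldType) (n : nat).
Notation pt := 'rV[R]_n.

Definition dotp (c y : pt) : R := \sum_(i < n) c 0 i * y 0 i.

Definition in_conv (S : seq pt) (y : pt) : Prop :=
  exists lam : 'I_(size S) -> R,
    (forall i, 0 <= lam i) /\ \sum_i lam i = 1 /\
    y = \sum_i lam i *: S`_(nat_of_ord i).

Definition is_polytope (P : pt -> Prop) : Prop :=
  exists S : seq pt, forall y, P y <-> in_conv S y.

Definition affindep (k : nat) (p : 'I_k.+1 -> pt) : bool :=
  row_free (\matrix_(i < k) (p (lift ord0 i) - p ord0)).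

Definition has_dim (K : pt -> Prop) (k : nat) : Prop :=
  (exists p : 'I_k.+1 -> pt, (forall i, K (p i)) /\ affindep p) /\
  ~ (exists p : 'I_k.+2 -> pt, (forall i, K (p i)) /\ affindep p).

(* F is a face of K: the intersection of K with a supporting hyperplane
   (c = 0 allowed, giving K itself; empty faces allowed) *)
Definition is_face (K F : pt -> Prop) : Prop :=
  (exists (c : pt) (beta : R),
    (forall y, K y -> dotp c y <= beta) /\
    (forall y, F y <-> (K y /\ dotp c y = beta))).

Definition is_vertex (K : pt -> Prop) (u : pt) : Prop :=
  is_face K (fun y => y = u).

Definition adjacent (K : pt -> Prop) (u v : pt) : Prop :=
  [/\ is_vertex K u, is_vertex K v, u <> v &
      exists E, [/\ is_face K E, has_dim E 1, E u & E v]].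

Definition degree (K : pt -> Prop) (v : pt) (k : nat) : Prop :=
  exists l : seq pt, [/\ uniq l, size l = k &
                         forall u, adjacent K v u <-> u \in l].

Definition simple_at (K : pt -> Prop) (v : pt) : Prop :=
  exists d, has_dim K d /\ degree K v d.

End Polytopes.

From HB Require Import structures.
From mathcomp Require Import all_boot all_order all_algebra.
From mathcomp Require Import ring lra.
From Stdlib Require Import Classical ClassicalEpsilon.
Set Implicit Arguments. Unset Strict Implicit. Unset Printing Implicit Defensive.
Import Order.TTheory GRing.Theory Num.Theory.
Local Open Scope ring_scope.

(* Write P as the convex hull of a finite set S.  At the simple vertex w the
   d edge directions d_k = l_k - w are linearly independent and span the cone
   of P at w: every irredundant generator of that cone is, by Farkas' lemma,
   the direction of an edge.  Hence the edge [w, v] of P' runs along some d_t,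
   with v = w + lam d_t, and lam < 1 because the vertex l_t can neither lie
   inside [w, v] nor equal v (as a.l_t <> b).  P' is again a polytope (the hull
   of the points of S below the cut and of the crossing points of segments of
   S), and its cone at v is spanned by -d_t and by the d_k, k <> t, pushed
   along d_t into the hyperplane a.y = 0.  These d vectors are independent, so
   P' has dimension d and v has exactly one neighbour on each of the d rays. *)

Section Cones.
Variables (R : realFieldType) (n : nat).
Notation pt := 'rV[R]_n.
Implicit Types (c g h p q x y z : pt) (G X : seq pt).

Lemma dotpDr c x y : dotp c (x + y) = dotp c x + dotp c y.
Proof. by rewrite /dotp -big_split; apply: eq_bigr => i _; rewrite mxE mulrDr. Qed.

Lemma dotpZr c k x : dotp c (k *: x) = k * dotp c x.
Proof. by rewrite /dotp mulr_sumr; apply: eq_bigr => i _; rewrite mxE mulrCA. Qed.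

Lemma dotpBr c x y : dotp c (x - y) = dotp c x - dotp c y.
Proof. by rewrite dotpDr -scaleN1r dotpZr mulN1r. Qed.

Lemma dotp0r c : dotp c 0 = 0.
Proof. by rewrite -(scale0r 0) dotpZr mul0r. Qed.

Lemma dotpC c x : dotp c x = dotp x c.
Proof. by apply: eq_bigr => i _; rewrite mulrC. Qed.

Lemma dotpDl c1 c2 x : dotp (c1 + c2) x = dotp c1 x + dotp c2 x.
Proof. by rewrite !(dotpC _ x) dotpDr. Qed.

Lemma dotpZl k c x : dotp (k *: c) x = k * dotp c x.
Proof. by rewrite !(dotpC _ x) dotpZr. Qed.

Lemma dotpBl c1 c2 x : dotp (c1 - c2) x = dotp c1 x - dotp c2 x.
Proof. by rewrite !(dotpC _ x) dotpBr. Qed.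

Lemma dotp_sumr c I (r : seq I) (P : pred I) (F : I -> pt) :
  dotp c (\sum_(i <- r | P i) F i) = \sum_(i <- r | P i) dotp c (F i).
Proof. by elim/big_rec2: _ => [|i y1 y2 _ <-]; rewrite ?dotp0r ?dotpDr. Qed.

Lemma dotp_gt0 x : x != 0 -> 0 < dotp x x.
Proof.
move=> x0; have sq_ge0 i : 0 <= x 0 i * x 0 i by rewrite -expr2 sqr_ge0.
rewrite lt_def sumr_ge0 // andbT; apply: contra x0 => /eqP /psumr_eq0P x2_0.
apply/eqP/rowP => i; rewrite mxE.
by have /eqP := x2_0 (fun i _ => sq_ge0 i) i isT; rewrite mulf_eq0 orbb => /eqP.
Qed.

(* [in_conv X] is [nncomb X 1] by definition. *)
Definition nncomb X (t : R) y : Prop :=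
  exists lam : 'I_(size X) -> R,
    (forall i, 0 <= lam i) /\ \sum_i lam i = t /\ y = \sum_i lam i *: X`_i.

Definition cone X y : Prop := exists t, nncomb X t y.

Lemma nncomb0 X : nncomb X 0 0.
Proof.
by exists (fun _ => 0); split=> //; split; rewrite big1 // => i _; rewrite scale0r.
Qed.

Lemma nncombD X t1 t2 y1 y2 :
  nncomb X t1 y1 -> nncomb X t2 y2 -> nncomb X (t1 + t2) (y1 + y2).
Proof.
move=> [l1 [l1_ge0 [<- ->]]] [l2 [l2_ge0 [<- ->]]].
exists (fun i => l1 i + l2 i); split; first by move=> i; rewrite addr_ge0.
split; first by rewrite big_split.
by rewrite -big_split; apply: eq_bigr => i _; rewrite scalerDl.
Qed.

Lemma nncombZ X k t y : 0 <= k -> nncomb X t y -> nncomb X (k * t) (k *: y).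
Proof.
move=> k_ge0 [l [l_ge0 [<- ->]]]; exists (fun i => k * l i).
split; first by move=> i; rewrite mulr_ge0.
rewrite mulr_sumr scaler_sumr; split=> //.
by apply: eq_bigr => i _; rewrite scalerA.
Qed.

Lemma nncomb_mem X x : x \in X -> nncomb X 1 x.
Proof.
move=> xX; pose j := Ordinal (etrans (index_mem x X) xX).
exists (fun i => (i == j)%:R); split; first by move=> i; rewrite ler0n.
split; first by rewrite (bigD1 j) //= eqxx big1 ?addr0 // => i /negbTE ->.
rewrite (bigD1 j) //= eqxx scale1r big1 ?addr0 ?nth_index // => i /negbTE ->.
by rewrite scale0r.
Qed.

Lemma nncomb_sum X I (r : seq I) (P : pred I) (T : I -> R) (F : I -> pt) :
  (forall i, P i -> nncomb X (T i) (F i)) ->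
  nncomb X (\sum_(i <- r | P i) T i) (\sum_(i <- r | P i) F i).
Proof.
by move=> hF; elim/big_rec2: _ => [|i y1 y2 /hF]; [exact: nncomb0 | apply: nncombD].
Qed.

Lemma nncomb_dotp_le X t y c b :
  nncomb X t y -> (forall x, x \in X -> dotp c x <= b) -> dotp c y <= t * b.
Proof.
move=> [l [l_ge0 [<- ->]]] Xb; rewrite dotp_sumr mulr_suml; apply: ler_sum => i _.
by rewrite dotpZr ler_wpM2l // Xb // mem_nth.
Qed.

Lemma nncomb_trans X Y t y :
  (forall x, x \in X -> nncomb Y 1 x) -> nncomb X t y -> nncomb Y t y.
Proof.
move=> XY [l [l_ge0 [<- ->]]]; apply: nncomb_sum => i _.
by have := nncombZ (l_ge0 i) (XY _ (mem_nth 0 (ltn_ord i))); rewrite mulr1.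
Qed.

Lemma nncomb_nil t y : nncomb [::] t y -> t = 0 /\ y = 0.
Proof. by move=> [l [_ [<- ->]]]; rewrite !big_ord0. Qed.

Lemma nncomb_consP g G t y :
  nncomb (g :: G) t y <-> exists k, 0 <= k /\ nncomb G (t - k) (y - k *: g).
Proof.
split=> [[l [l_ge0 [<- ->]]] | [k [k_ge0 hG]]].
  exists (l ord0); split=> //; exists (fun i => l (lift ord0 i)).
  by split=> //; split; rewrite big_ord_recl addrAC subrr add0r.
have hg := nncombZ k_ge0 (nncomb_mem (mem_head g G)).
have hG' : nncomb (g :: G) (t - k) (y - k *: g).
  by apply: nncomb_trans hG => x xG; apply: nncomb_mem; rewrite inE xG orbT.
by have := nncombD hg hG'; rewrite mulr1 addrCA subrr addr0 addrCA subrr addr0.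
Qed.

Lemma cone_mem X x : x \in X -> cone X x.
Proof. by move/nncomb_mem; exists 1. Qed.

Lemma cone0 X : cone X 0.
Proof. by exists 0; apply: nncomb0. Qed.

Lemma coneD X y1 y2 : cone X y1 -> cone X y2 -> cone X (y1 + y2).
Proof. by move=> [t1 h1] [t2 h2]; exists (t1 + t2); apply: nncombD. Qed.

Lemma coneZ X k y : 0 <= k -> cone X y -> cone X (k *: y).
Proof. by move=> k_ge0 [t h]; exists (k * t); apply: nncombZ. Qed.

Lemma cone_sum X I (r : seq I) (P : pred I) (F : I -> pt) :
  (forall i, P i -> cone X (F i)) -> cone X (\sum_(i <- r | P i) F i).
Proof. by move=> hF; apply: big_ind => //; [exact: cone0 | exact: coneD]. Qed.

Lemma cone_trans X Y y : (forall x, x \in X -> cone Y x) -> cone X y -> cone Y y.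
Proof.
move=> XY [t [l [l_ge0 [_ ->]]]]; apply: cone_sum => i _.
exact/coneZ/XY/mem_nth.
Qed.

Lemma cone_cons g G y : cone G y -> cone (g :: G) y.
Proof. by apply: cone_trans => x xG; apply: cone_mem; rewrite inE xG orbT. Qed.

Lemma cone_dotp_le0 X y c :
  cone X y -> (forall x, x \in X -> dotp c x <= 0) -> dotp c y <= 0.
Proof. by move=> [t h] /(nncomb_dotp_le h); rewrite mulr0. Qed.

Lemma cone_dotp_eq0 X y c : cone X y -> (forall x, x \in X -> dotp c x < 0) ->
  0 <= dotp c y -> y = 0.
Proof.
move=> [t [l [l_ge0 [_ ->]]]] Xneg.
have term_ge0 i : 0 <= - (l i * dotp c X`_i).
  by rewrite oppr_ge0 mulr_ge0_le0 // ltW // Xneg // mem_nth.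
rewrite dotp_sumr (eq_bigr _ (fun i _ => dotpZr _ _ _)) -oppr_le0 -sumrN => sum_le0.
have /psumr_eq0P term_eq0 : \sum_i - (l i * dotp c X`_i) = 0.
  by apply/eqP; rewrite eq_le sum_le0 sumr_ge0.
rewrite big1 // => i _; have /eqP := term_eq0 (fun i _ => term_ge0 i) i isT.
rewrite oppr_eq0 mulf_eq0 => /orP [/eqP -> | ]; first exact: scale0r.
by rewrite lt_eqF // Xneg // mem_nth.
Qed.

Lemma cone_rem g G y : cone G y -> exists k, 0 <= k /\ cone (rem g G) (y - k *: g).
Proof.
move=> [t [l [l_ge0 [_ ->]]]].
exists (\sum_(i < size G | G`_i == g) l i); split; first exact: sumr_ge0.
rewrite (bigID (fun i : 'I_(size G) => G`_i == g)) /= scaler_suml.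
rewrite (eq_bigr (fun i => l i *: g)) => [|i /eqP -> //].
rewrite addrAC subrr add0r; apply: cone_sum => i Gi.
exact/coneZ/cone_mem/rem_mem/mem_nth.
Qed.

Lemma cone_map_coef (f : pt -> pt) (l : seq pt) y : cone (map f l) y ->
  exists mu : 'I_(size l) -> R, (forall k, 0 <= mu k) /\ y = \sum_k mu k *: f l`_k.
Proof.
elim: l y => [|u l IH] y /=.
  by move=> [t /nncomb_nil [_ ->]]; exists (fun _ => 0); split; rewrite ?big_ord0.
move=> [t /nncomb_consP [k [k_ge0 h]]].
have [mu [mu_ge0 yE]] := IH _ (ex_intro _ (t - k) h).
exists (fun i => if unlift ord0 i is Some j then mu j else k); split.
  by move=> i; case: (unlift ord0 i).
rewrite big_ord_recl unlift_none -[y](subrK (k *: f u)) yE addrC; congr (_ + _).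
by apply: eq_bigr => i _; rewrite liftK.
Qed.

Lemma nncomb_map (f : pt -> pt) G t q : linear f ->
  nncomb (map f G) t q -> exists2 r, nncomb G t r & q = f r.
Proof.
move=> fL; have f0 : f 0 = 0.
  have := fL 1 0 0; rewrite scaler0 addr0 scale1r => ff0.
  by apply: (@addrI _ (f 0)); rewrite addr0 -ff0.
elim: G t q => [|h G IH] t q /=.
  by move/nncomb_nil => [-> ->]; exists 0; [exact: nncomb0 | rewrite f0].
move/nncomb_consP => [k [k_ge0 /IH [r hr qE]]]; exists (k *: h + r).
  by apply/nncomb_consP; exists k; split; rewrite // addrAC subrr add0r.
by rewrite fL -qE addrC subrK.
Qed.

Lemma farkas G p : ~ cone G p ->
  exists c, 0 < dotp c p /\ forall h, h \in G -> dotp c h <= 0.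
Proof.
move Hm : (size G) => m; elim: m G p Hm => [|m IH] [|g G] p //= => [_ | [sz]] ncp.
  exists p; split=> //; apply: dotp_gt0; apply/eqP => p0; apply: ncp.
  by rewrite p0; exact: cone0.
have [c [cp cG]] := IH G p sz (fun hc => ncp (cone_cons g hc)).
case: (lerP (dotp c g) 0) => cg.
  by exists c; split=> // h; rewrite inE => /predU1P [-> | /cG].
have cg0 : dotp c g != 0 by rewrite gt_eqF.
(* project along [g] onto the hyperplane [c = 0] and recurse *)
pose L z := z - (dotp c z / dotp c g) *: g.
have LL : linear L.
  by move=> k y z; apply/rowP => i; rewrite /L !mxE dotpDr dotpZr; field.
have ncL : ~ cone (map L G) (L p).
  move=> [t /(nncomb_map LL) [r hr rE]]; apply: ncp.
  have cr : dotp c r <= 0 by apply: cone_dotp_le0 cG; exists t.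
  have -> : p = r + ((dotp c p - dotp c r) / dotp c g) *: g.
    by apply/rowP => i; move/rowP/(_ i): rE; rewrite /L !mxE => ?; lra.
  apply/coneD; first by apply: cone_cons; exists t.
  apply/coneZ/cone_mem/mem_head.
  by rewrite divr_ge0 ?ltW // subr_gt0 (le_lt_trans cr).
have [c' [c'p c'G]] := IH _ _ (etrans (size_map _ _) sz) ncL.
have c'L z : dotp (c' - (dotp c' g / dotp c g) *: c) z = dotp c' (L z).
  by rewrite /L dotpBl dotpZl dotpBr dotpZr; congr (_ - _); field.
exists (c' - (dotp c' g / dotp c g) *: c); rewrite c'L; split=> // h.
rewrite c'L inE => /predU1P [-> | hG]; last exact/c'G/map_f.
by rewrite /L divff // scale1r subrr dotp0r.
Qed.

End Cones.

Section Independence.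
Variables (R : realFieldType) (n : nat).
Notation pt := 'rV[R]_n.
Implicit Types (g z : pt).

Definition indep m (q : 'I_m -> pt) : Prop :=
  forall mu : 'I_m -> R, \sum_k mu k *: q k = 0 -> forall k, mu k = 0.

Definition affine_frame m z (q : 'I_m -> pt) (i : 'I_m.+1) : pt :=
  if unlift ord0 i is Some k then z + q k else z.

Lemma sum_delta (V : lmodType R) m (F : 'I_m -> V) j (x : R) :
  \sum_k ((k == j)%:R * x) *: F k = x *: F j.
Proof.
rewrite (bigD1 j) //= eqxx mul1r big1 ?addr0 // => k /negbTE ->.
by rewrite mul0r scale0r.
Qed.

Lemma sum_shift (V : lmodType R) m (mu : 'I_m -> R) (F : 'I_m -> V) j (c : R) :
  \sum_k (mu k + (k == j)%:R * c) *: F k = \sum_k mu k *: F k + c *: F j.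
Proof.
rewrite (eq_bigr (fun k => mu k *: F k + ((k == j)%:R * c) *: F k)) => [|k _].
  by rewrite big_split /= sum_delta.
exact: scalerDl.
Qed.

Lemma mulmx_rows m (u : 'rV[R]_m) (q : 'I_m -> pt) :
  u *m (\matrix_(k < m) q k) = \sum_k u 0 k *: q k.
Proof. by rewrite mulmx_sum_row; apply: eq_bigr => k _; rewrite rowK. Qed.

Lemma indep_row_free m (q : 'I_m -> pt) : indep q <-> row_free (\matrix_(k < m) q k).
Proof.
split=> [q_indep | /row_free_inj q_free mu mu_q k].
  apply: inj_row_free => u; rewrite mulmx_rows => /q_indep u0.
  by apply/rowP => k; rewrite mxE u0.
suff /rowP/(_ k) : \row_k mu k = 0 by rewrite !mxE.
by apply: q_free; rewrite mul0mx mulmx_rows; under eq_bigr do rewrite mxE.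
Qed.

Lemma indep_dual m (q : 'I_m -> pt) (v : 'I_m -> R) :
  indep q -> exists c, forall k, dotp c (q k) = v k.
Proof.
move=> /indep_row_free /row_freeP [B BqE]; exists (B *m \col_k v k)^T => k.
have -> : dotp (B *m \col_k v k)^T (q k) = (q k *m (B *m \col_k v k)) 0 0.
  by rewrite /dotp mxE; apply: eq_bigr => i _; rewrite mxE mulrC.
by rewrite -(rowK q k) mulmxA -row_mul BqE -row_mul mul1mx !mxE.
Qed.

Lemma indep_neq0 m (r : 'I_m -> pt) j : indep r -> r j != 0.
Proof.
move=> r_indep; apply/eqP => rj0.
have := r_indep (fun k => (k == j)%:R * 1); rewrite sum_delta rj0 scaler0.
by move=> /(_ erefl j) /eqP; rewrite eqxx mul1r oner_eq0.
Qed.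

Lemma indep_pair m (r : 'I_m -> pt) j k (a b : R) :
  indep r -> j != k -> a != 0 -> b != 0 ->
  indep (fun i : 'I_2 => if i == ord0 then a *: r j else b *: r k).
Proof.
move=> r_indep jk a0 b0 mu; rewrite big_ord_recl big_ord1 /= => mu_r.
pose nu l := (l == j)%:R * (mu ord0 * a) + (l == k)%:R * (mu (lift ord0 ord0) * b).
have nu_r : \sum_l nu l *: r l = 0.
  rewrite -[RHS]mu_r (eq_bigr (fun l => ((l == j)%:R * (mu ord0 * a)) *: r l +
    ((l == k)%:R * (mu (lift ord0 ord0) * b)) *: r l)) => [|l _]; last exact: scalerDl.
  by rewrite big_split /= !sum_delta !scalerA.
have := r_indep nu nu_r j; have := r_indep nu nu_r k.
rewrite /nu !eqxx (negbTE jk) eq_sym (negbTE jk) !mul0r !mul1r add0r addr0.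
move=> /eqP; rewrite mulf_eq0 (negbTE b0) orbF => /eqP mu1.
move=> /eqP; rewrite mulf_eq0 (negbTE a0) orbF => /eqP mu0.
by move=> i; case: (unliftP ord0 i) => [i' -> | ->] //; rewrite ord1.
Qed.

Lemma affindep_frame m z (q : 'I_m -> pt) : indep q -> affindep (affine_frame z q).
Proof.
move=> /indep_row_free; rewrite /affindep; congr (row_free _).
by apply/row_matrixP => i; rewrite !rowK /affine_frame liftK unlift_none addrC addKr.
Qed.

Lemma affindep_rank k m (p : 'I_k.+1 -> pt) z (q : 'I_m -> pt) :
  (forall i, exists mu : 'I_m -> R, p i - z = \sum_j mu j *: q j) ->
  affindep p -> (k <= \rank (\matrix_(j < m) q j))%N.
Proof.
move=> p_span /eqP p_free; rewrite -{1}p_free; apply: mxrankS.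
apply/row_subP => i; rewrite rowK.
have [mu1 e1] := p_span (lift ord0 i); have [mu0 e0] := p_span ord0.
have -> : p (lift ord0 i) - p ord0 = (\row_j (mu1 j - mu0 j)) *m \matrix_(j < m) q j.
  rewrite mulmx_rows; under eq_bigr do rewrite mxE scalerBl.
  by rewrite sumrB -e1 -e0 opprB addrA subrK.
exact: submxMl.
Qed.

Lemma has_dim_line (E : pt -> Prop) z g : g != 0 -> E z -> E (z + g) ->
  (forall y, E y -> exists tau, y = z + tau *: g) -> has_dim E 1.
Proof.
move=> g0 Ez Ezg E_line; split.
  exists (affine_frame z (fun _ : 'I_1 => g)); split.
    by move=> i; rewrite /affine_frame; case: unlift.
  apply: affindep_frame => mu; rewrite big_ord1 => /eqP.
  by rewrite scaler_eq0 (negbTE g0) orbF => /eqP mu0 k; rewrite ord1.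
move=> [p [Ep p_indep]].
have p_span i : exists mu : 'I_1 -> R, p i - z = \sum_j mu j *: (fun _ => g) j.
  have [tau ->] := E_line _ (Ep i).
  by exists (fun _ => tau); rewrite big_ord1 addrC addKr.
by have := leq_trans (affindep_rank p_span p_indep) (rank_leq_row _).
Qed.

End Independence.

Section Vertices.
Variables (R : realFieldType) (n : nat).
Notation pt := 'rV[R]_n.
Implicit Types (c f g x y z : pt) (X : seq pt) (K : pt -> Prop).

Lemma vertex_mem K u : is_vertex K u -> K u.
Proof. by move=> [c [b [_ /(_ u) [/(_ erefl) []]]]]. Qed.

Lemma vertex_extreme K x y1 y2 th : is_vertex K x -> K y1 -> K y2 ->
  0 < th -> th < 1 -> x = (1 - th) *: y1 + th *: y2 -> x = y1.
Proof.
move=> [c [b [c_le xE]]] Ky1 Ky2 th_gt0 th_lt1 x_mid.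
have [_ cx] := (xE x).1 erefl; have c1 := c_le _ Ky1; have c2 := c_le _ Ky2.
suff c1b : dotp c y1 = b by symmetry; apply/xE.
by move: cx; rewrite x_mid dotpDr !dotpZr => cx; nra.
Qed.

Lemma vertex_ray_uniq K z g s t : K z -> g != 0 -> 0 < s -> 0 < t ->
  is_vertex K (z + s *: g) -> is_vertex K (z + t *: g) -> s = t.
Proof.
wlog st : s t / s <= t => [hwlog | Kz g0 s_gt0 t_gt0 vs vt].
  by case: (lerP s t) => [|/ltW] st *; [|symmetry]; apply: hwlog.
case: (eqVneq s t) => // s_ne_t; have {}st : s < t by rewrite lt_neqAle s_ne_t.
have zs_mid : z + s *: g = (1 - s / t) *: z + (s / t) *: (z + t *: g).
  by apply/rowP => i; rewrite !mxE; field; rewrite gt_eqF.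
have := vertex_extreme vs Kz (vertex_mem vt) _ _ zs_mid.
rewrite divr_gt0 // ltr_pdivrMr // mul1r => /(_ isT st) /(congr1 (fun y => y - z)) /eqP.
by rewrite addrAC !subrr add0r scaler_eq0 (negbTE g0) gt_eqF.
Qed.

Lemma vertex_ray_lt1 K z u y (lam : R) :
  is_vertex K u -> K z -> K y -> u <> z -> u <> y ->
  0 < lam -> y = z + lam *: (u - z) -> lam < 1.
Proof.
move=> vu Kz Ky uz uy lam_gt0 yE; case: (ltgtP lam 1) => // [lam_gt1 | lam1].
  have u_mid : u = (1 - lam^-1) *: z + lam^-1 *: y.
    by apply/rowP => i; rewrite yE !mxE; field; rewrite gt_eqF.
  by case: uz; apply: vertex_extreme vu Kz Ky _ _ u_mid; rewrite ?invr_gt0 ?invf_lt1.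
by case: uy; rewrite yE lam1 scale1r addrC subrK.
Qed.

Lemma strict_max_vertex K X u f : (forall y, K y <-> nncomb X 1 y) -> u \in X ->
  (forall x, x \in X -> x != u -> dotp f x < dotp f u) -> is_vertex K u.
Proof.
move=> KX uX f_max; have f_le x : x \in X -> dotp f x <= dotp f u.
  by move=> xX; case: (eqVneq x u) => [-> // | /(f_max x xX) /ltW].
exists f, (dotp f u); split.
  by move=> y /KX y_comb; rewrite -[dotp f u]mul1r (nncomb_dotp_le y_comb f_le).
move=> y; split=> [-> | [/KX [l [l_ge0 [l_sum yE]]] fy]].
  by split=> //; apply/KX/nncomb_mem.
have term_ge0 i : 0 <= l i * (dotp f u - dotp f X`_i).
  by rewrite mulr_ge0 // subr_ge0 f_le ?mem_nth.
have /psumr_eq0P term_eq0 : \sum_i l i * (dotp f u - dotp f X`_i) = 0.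
  transitivity (dotp f u * \sum_i l i - dotp f y); last by rewrite l_sum mulr1 fy subrr.
  rewrite yE dotp_sumr mulr_sumr -sumrB.
  by apply: eq_bigr => i _; rewrite dotpZr; ring.
rewrite yE -[u]scale1r -l_sum scaler_suml; apply: eq_bigr => i _.
case: (eqVneq X`_i u) => [-> // | Xiu].
have /eqP := term_eq0 (fun i _ => term_ge0 i) i isT.
rewrite mulf_eq0 subr_eq0 => /orP [/eqP -> | /eqP fXi]; first by rewrite !scale0r.
by have := f_max _ (mem_nth 0 (ltn_ord i)) Xiu; rewrite fXi ltxx.
Qed.

Lemma seq_argmax (f : pt -> R) X : X != [::] ->
  exists2 u, u \in X & forall x, x \in X -> f x <= f u.
Proof.
elim: X => // x X IH _; case: (eqVneq X [::]) => [-> | /IH [u uX u_max]].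
  by exists x; rewrite ?mem_head // => y /[!inE] /eqP ->.
case: (lerP (f u) (f x)) => [ux | xu].
  by exists x; rewrite ?mem_head // => y /[!inE] /predU1P [-> // | /u_max /le_trans]; apply.
exists u; first by rewrite inE uX orbT.
by move=> y /[!inE] /predU1P [-> | /u_max //]; exact: ltW.
Qed.

(* For [M] large, [f := M c + g] attains its maximum over [X] only on the face
   maximizing [c], and there only at the point furthest along [g]. *)
Lemma ray_face_vertex K X z c g t0 : (forall y, K y <-> nncomb X 1 y) ->
  (forall y, K y -> dotp c y <= dotp c z) ->
  (forall y, K y -> dotp c y = dotp c z -> exists tau, y = z + tau *: g) ->
  g != 0 -> dotp c g = 0 -> 0 < t0 -> K (z + t0 *: g) ->
  exists2 tau, t0 <= tau & is_vertex K (z + tau *: g).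
Proof.
move=> KX c_max c_ray g0 cg t0_gt0 Kzg.
have XK x : x \in X -> K x by move/nncomb_mem/KX.
have gg_gt0 := dotp_gt0 g0.
pose gap x := dotp c z - dotp c x.
pose M := 1 + \sum_(x <- X | 0 < gap x) `|dotp g x - dotp g z| / gap x.
pose f := M *: c + g.
have f_ray tau : dotp f (z + tau *: g) = M * dotp c z + dotp g z + tau * dotp g g.
  by rewrite dotpDl dotpZl !dotpDr !dotpZr cg; ring.
have f_off x : x \in X -> 0 < gap x -> dotp f x < dotp f (z + t0 *: g).
  move=> xX gap_gt0; rewrite f_ray dotpDl dotpZl.
  have : `|dotp g x - dotp g z| / gap x <= M - 1.
    rewrite /M addrAC subrr add0r (big_rem x) //= gap_gt0 lerDl.
    by apply: sumr_ge0 => y /ltW ?; rewrite divr_ge0.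
  rewrite ler_pdivrMr // => bound.
  have := ler_norm (dotp g x - dotp g z); have := mulr_gt0 t0_gt0 gg_gt0.
  rewrite /gap in bound gap_gt0; lra.
have on_face x : x \in X -> gap x <= 0 -> exists tx, x = z + tx *: g.
  move=> xX; rewrite /gap subr_le0 => czx; apply: c_ray (XK _ xX) _.
  by apply/eqP; rewrite eq_le czx andbT; apply/c_max/XK.
have X_neq_nil : X != [::].
  apply/eqP => X0; move: (iffLR (KX _) Kzg); rewrite X0 => /nncomb_nil [/eqP].
  by rewrite oner_eq0.
have [u uX u_max] := seq_argmax (dotp f) X_neq_nil.
have fu : dotp f (z + t0 *: g) <= dotp f u.
  by rewrite -[dotp f u]mul1r; apply: nncomb_dotp_le (iffLR (KX _) Kzg) _.
have [tu uE] : exists tu, u = z + tu *: g.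
  apply: (on_face u uX); rewrite leNgt; apply/negP => /(f_off u uX).
  by rewrite ltNge fu.
exists tu; first by move: fu; rewrite uE !f_ray lerD2l ler_pM2r.
rewrite -uE; apply: strict_max_vertex KX uX _ => x xX xu.
case: (ltP 0 (gap x)) => [gap_gt0 | /(on_face x xX) [tx xE]].
  exact: lt_le_trans (f_off x xX gap_gt0) fu.
have := u_max x xX; rewrite xE uE !f_ray lerD2l ler_pM2r // le_eqVlt.
case/orP => [/eqP txu | ]; last by rewrite ltrD2l ltr_pM2r.
by move: xu; rewrite xE uE txu eqxx.
Qed.

Lemma ray_face_adjacent K X z c g t0 : (forall y, K y <-> nncomb X 1 y) ->
  is_vertex K z -> (forall y, K y -> dotp c y <= dotp c z) ->
  (forall y, K y -> dotp c y = dotp c z -> exists tau, y = z + tau *: g) ->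
  g != 0 -> dotp c g = 0 -> 0 < t0 -> K (z + t0 *: g) ->
  exists2 tau, t0 <= tau & adjacent K z (z + tau *: g).
Proof.
move=> KX vz c_max c_ray g0 cg t0_gt0 Kzg.
have [tau t0_tau vtau] := ray_face_vertex KX c_max c_ray g0 cg t0_gt0 Kzg.
have tau_gt0 := lt_le_trans t0_gt0 t0_tau.
have taug0 : tau *: g != 0 by rewrite scaler_eq0 (negbTE g0) gt_eqF.
have Kz := vertex_mem vz.
exists tau => //; split=> //.
  by move/(congr1 (fun y => y - z))/eqP; rewrite subrr addrC addKr eq_sym (negbTE taug0).
exists (fun y => K y /\ dotp c y = dotp c z); split=> //.
- by exists c, (dotp c z).
- apply: (has_dim_line (z := z) taug0) => //.
    by split; [exact: vertex_mem vtau | rewrite dotpDr dotpZr cg mulr0 addr0].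
  move=> y [Ky cy]; have [s ->] := c_ray y Ky cy.
  by exists (s / tau); rewrite scalerA divfK // gt_eqF.
- by split; [exact: vertex_mem vtau | rewrite dotpDr dotpZr cg mulr0 addr0].
Qed.

Definition cone_at K z m (r : 'I_m -> pt) : Prop :=
  forall y, K y -> exists mu : 'I_m -> R,
    (forall k, 0 <= mu k) /\ y - z = \sum_k mu k *: r k.

Lemma adjacent_on_cone_ray K z m (r : 'I_m -> pt) (eps : 'I_m -> R) y :
  indep r -> (forall k, 0 < eps k) -> (forall k, K (z + eps k *: r k)) ->
  cone_at K z r -> adjacent K z y -> exists j tau, 0 < tau /\ y = z + tau *: r j.
Proof.
move=> r_indep eps_gt0 K_steps z_cone [_ _ zy [E [[c [b [c_le EE]]] [_ E_dim] Ez Ey]]].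
have [Kz cz] := (EE z).1 Ez; have [Ky cy] := (EE y).1 Ey.
have cr_le0 k : dotp c (r k) <= 0.
  by have := c_le _ (K_steps k); rewrite dotpDr dotpZr cz gerDl pmulr_rle0.
have [mu [mu_ge0 yE]] := z_cone y Ky.
have term_eq0 k : mu k * dotp c (r k) = 0.
  have term_ge0 i : 0 <= - (mu i * dotp c (r i)) by rewrite oppr_ge0 mulr_ge0_le0.
  have sum_eq0 : \sum_i - (mu i * dotp c (r i)) = 0.
    rewrite sumrN -(eq_bigr _ (fun i _ => dotpZr _ _ _)) -dotp_sumr -yE.
    by rewrite dotpBr cy cz subrr oppr0.
  have /eqP := @psumr_eq0P _ _ _ _ (fun i _ => term_ge0 i) sum_eq0 k isT.
  by rewrite oppr_eq0 => /eqP.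
have cr_eq0 k : mu k != 0 -> dotp c (r k) = 0.
  by move=> mu_k; move/eqP: (term_eq0 k); rewrite mulf_eq0 (negbTE mu_k) => /eqP.
have [j mu_j] : exists j, mu j != 0.
  case: (boolP [exists j, mu j != 0]) => [/existsP // | /existsPn mu0].
  case: zy; apply/eqP; rewrite eq_sym -subr_eq0 yE big1 // => k _.
  by move/negPn/eqP: (mu0 k) => ->; rewrite scale0r.
have mu_k k : k != j -> mu k = 0.
  move=> kj; apply/eqP/negPn/negP => mu_k; apply: E_dim.
  (* otherwise [z], [z + eps j r j], [z + eps k r k] are affinely independent in [E] *)
  exists (affine_frame z (fun i : 'I_2 => if i == ord0 then eps j *: r j else eps k *: r k)).
  split.
    move=> i; apply/EE; rewrite /affine_frame; case: (unlift ord0 i) => [i'|] //.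
    split; first by case: ifP.
    by case: ifP => _; rewrite dotpDr dotpZr cr_eq0 // mulr0 addr0.
  apply/affindep_frame/indep_pair => //;
    [by rewrite eq_sym | exact: lt0r_neq0 (eps_gt0 j) | exact: lt0r_neq0 (eps_gt0 k)].
exists j, (mu j); split; first by rewrite lt_def mu_j mu_ge0.
have -> : y = z + (y - z) by rewrite addrC subrK.
rewrite yE (bigD1 j) //= big1 ?addr0 // => k /mu_k ->; exact: scale0r.
Qed.

Lemma cone_irredundant G0 : exists G, {subset G <= G0} /\
  (forall p, cone G0 p -> cone G p) /\ (forall g, g \in G -> ~ cone (rem g G) g).
Proof.
have [N] := ubnP (size G0); elim: N G0 => // N IH G0 G0_lt.
case: (classic (exists2 g, g \in G0 & cone (rem g G0) g)) => [[g gG g_red] | G0_irr].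
  have [|G [GG0 [G0G G_irr]]] := IH (rem g G0).
    rewrite size_rem //; move: G0_lt; have : (0 < size G0)%N by case: (G0) gG.
    by case: (size G0).
  exists G; split; first by move=> x /GG0 /mem_rem.
  split=> // p /(cone_rem g) [k [k_ge0 pk]]; apply: G0G.
  by rewrite -(subrK (k *: g) p); apply: coneD => //; apply: coneZ.
by exists G0; split=> //; split=> // g gG g_red; apply: G0_irr; exists g.
Qed.

Lemma irredundant_generator_adjacent K S w c0 G g :
  (forall y, K y <-> nncomb S 1 y) -> is_vertex K w ->
  (forall y, K y -> cone G (y - w)) -> (forall h, h \in G -> dotp c0 h < 0) ->
  g \in G -> ~ cone (rem g G) g -> K (w + g) ->
  exists2 tau, 1 <= tau & adjacent K w (w + tau *: g).
Proof.
move=> KS vw K_cone G_neg gG g_irr Kwg.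
have [c3 [c3g c3_rem]] := farkas g_irr.
have c0g := G_neg g gG.
(* tilt [c3] along [c0] until it vanishes on [g] *)
pose c := c3 + (dotp c3 g / - dotp c0 g) *: c0.
have cg : dotp c g = 0 by rewrite dotpDl dotpZl; field; rewrite lt_eqF.
have c_rem h : h \in rem g G -> dotp c h < 0.
  move=> hG; rewrite dotpDl dotpZl.
  have := c3_rem h hG; have := G_neg h (mem_rem hG).
  have : 0 < dotp c3 g / - dotp c0 g by rewrite divr_gt0 // oppr_gt0.
  nra.
have K_split y : K y -> exists k, 0 <= k /\ cone (rem g G) (y - w - k *: g).
  by move/K_cone/(cone_rem g).
have c_max y : K y -> dotp c y <= dotp c w.
  move/K_split => [k [_ /cone_dotp_le0 /(_ (fun h hG => ltW (c_rem h hG)))]].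
  by rewrite !dotpBr dotpZr cg mulr0 subr0 subr_le0.
have c_ray y : K y -> dotp c y = dotp c w -> exists tau, y = w + tau *: g.
  move=> Ky cy; have [k [_ /cone_dotp_eq0 /(_ c_rem) yk]] := K_split y Ky; exists k.
  move: yk; rewrite !dotpBr dotpZr cg mulr0 subr0 cy subrr lexx => /(_ isT) /eqP.
  by rewrite subr_eq0 => /eqP <-; rewrite addrC subrK.
have g0 : g != 0 by apply: contraTneq c0g => ->; rewrite dotp0r ltxx.
by apply: ray_face_adjacent KS vw c_max c_ray g0 cg ltr01 _; rewrite scale1r.
Qed.

Lemma cone_at_neighbors K S w l : (forall y, K y <-> nncomb S 1 y) ->
  is_vertex K w -> (forall u, adjacent K w u <-> u \in l) ->
  cone_at K w (fun k : 'I_(size l) => l`_k - w).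
Proof.
move=> KS vw w_nbrs; have [c0 [b0 [c0_le c0_w]]] := vw.
have [_ c0w] := (c0_w w).1 erefl.
have SK s : s \in S -> K s by move/nncomb_mem/KS.
pose G0 := [seq s - w | s <- S & s != w].
have G0_neg h : h \in G0 -> dotp c0 h < 0.
  case/mapP => s /[!mem_filter] /andP [sw sS] ->.
  rewrite dotpBr c0w subr_lt0 lt_neqAle (c0_le _ (SK s sS)) andbT.
  by apply: contra sw => /eqP c0s; apply/eqP/c0_w; split=> //; exact: SK.
have K_cone y : K y -> cone G0 (y - w).
  move=> /KS [lam [lam_ge0 [lam_sum ->]]].
  rewrite -[w]scale1r -lam_sum scaler_suml -sumrB; apply: cone_sum => i _.
  rewrite -scalerBr; apply: coneZ => //.
  case: (eqVneq S`_i w) => [-> | Siw]; first by rewrite subrr; exact: cone0.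
  by apply/cone_mem/map_f; rewrite mem_filter Siw mem_nth.
have [G [GG0 [G0G G_irr]]] := cone_irredundant G0.
have G_nbrs g : g \in G -> cone [seq u - w | u <- l] g.
  move=> gG; have [s sS gE] : exists2 s, s \in S & g = s - w.
    by case/mapP: (GG0 g gG) => s /[!mem_filter] /andP [_ sS] ->; exists s.
  have Kwg : K (w + g) by rewrite gE addrC subrK; exact: SK.
  have [tau tau_ge1 /w_nbrs nbr] := irredundant_generator_adjacent KS vw
    (fun y Ky => G0G _ (K_cone y Ky)) (fun h hG => G0_neg h (GG0 h hG)) gG (G_irr g gG) Kwg.
  have tau_gt0 : 0 < tau := lt_le_trans ltr01 tau_ge1.
  rewrite -[g]scale1r -(mulVf (lt0r_neq0 tau_gt0)) -scalerA.
  apply/coneZ/cone_mem; first by rewrite invr_ge0 ltW.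
  have -> : tau *: g = w + tau *: g - w by rewrite addrC addKr.
  exact: map_f.
by move=> y /K_cone /G0G /(cone_trans G_nbrs) /cone_map_coef.
Qed.

End Vertices.

Section Cut.
Variables (R : realFieldType) (n : nat).
Notation pt := 'rV[R]_n.
Implicit Types (a x y z : pt) (S : seq pt).

Lemma sum_cross_terms (V : lmodType R) m (L : pred 'I_m) (lam al be : 'I_m -> R)
    (F : 'I_m -> V) (B : R) :
  B != 0 -> B = \sum_(i | L i) lam i * be i ->
  \sum_(i | L i) \sum_(j | ~~ L j) ((lam i * lam j / B) *: (al j *: F i + be i *: F j)) =
  ((\sum_(j | ~~ L j) lam j * al j) / B) *: \sum_(i | L i) lam i *: F i
    + \sum_(j | ~~ L j) lam j *: F j.
Proof.
move=> B0 BE.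
transitivity (\sum_(i | L i) \sum_(j | ~~ L j) ((lam i * lam j / B * al j) *: F i)
  + \sum_(i | L i) \sum_(j | ~~ L j) ((lam i * lam j / B * be i) *: F j)).
  rewrite -big_split; apply: eq_bigr => i _; rewrite -big_split; apply: eq_bigr => j _.
  by rewrite scalerDr !scalerA.
congr (_ + _).
  rewrite scaler_sumr; apply: eq_bigr => i _; rewrite -scaler_suml scalerA; congr (_ *: _).
  by rewrite !mulr_suml; apply: eq_bigr => j _; ring.
rewrite exchange_big /=; apply: eq_bigr => j _; rewrite -scaler_suml; congr (_ *: _).
transitivity (lam j * (\sum_(i | L i) lam i * be i) / B); last by rewrite -BE mulfK.
by rewrite mulr_sumr mulr_suml; apply: eq_bigr => i _; ring.
Qed.

Definition cut_point a (b : R) x z : pt :=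
  ((dotp a z - b) / (dotp a z - dotp a x)) *: x
  + ((b - dotp a x) / (dotp a z - dotp a x)) *: z.

Definition cut_gens S a (b : R) : seq pt :=
  [seq s <- S | dotp a s <= b] ++
  [seq cut_point a b x z | x <- [seq s <- S | dotp a s <= b],
                           z <- [seq s <- S | b < dotp a s]].

Lemma cut_point_dot a b x z :
  dotp a x <= b -> b < dotp a z -> dotp a (cut_point a b x z) = b.
Proof.
move=> ax az; have d0 : dotp a z - dotp a x != 0 by rewrite subr_eq0 gt_eqF // (le_lt_trans ax).
by rewrite /cut_point dotpDr !dotpZr; field.
Qed.

Lemma cut_point_mem S a b x z : x \in S -> z \in S ->
  dotp a x <= b -> b < dotp a z -> nncomb S 1 (cut_point a b x z).
Proof.
move=> xS zS ax az; have d_gt0 : 0 < dotp a z - dotp a x by rewrite subr_gt0 (le_lt_trans ax).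
have w1 : 0 <= (dotp a z - b) / (dotp a z - dotp a x).
  by apply: divr_ge0; [rewrite subr_ge0 ltW | exact: ltW].
have w2 : 0 <= (b - dotp a x) / (dotp a z - dotp a x).
  by apply: divr_ge0; [rewrite subr_ge0 | exact: ltW].
have := nncombD (nncombZ w1 (nncomb_mem xS)) (nncombZ w2 (nncomb_mem zS)).
by rewrite !mulr1 -mulrDl addrA subrK divff // gt_eqF.
Qed.

Lemma cut_gens_mem S a b x : x \in cut_gens S a b -> nncomb S 1 x /\ dotp a x <= b.
Proof.
rewrite mem_cat => /orP [| /allpairsP [[x1 z1] [/= + + ->]]].
  by rewrite mem_filter => /andP [ax xS]; split=> //; apply: nncomb_mem.
rewrite !mem_filter => /andP [ax xS] /andP [az zS].
by split; [exact: cut_point_mem | rewrite cut_point_dot].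
Qed.

Section CutDecomposition.
Variables (S : seq pt) (a : pt) (b : R) (lam : 'I_(size S) -> R).
Hypotheses (lam_ge0 : forall i, 0 <= lam i) (lam_sum : \sum_i lam i = 1).
Hypothesis ay : dotp a (\sum_i lam i *: S`_i) <= b.

Let L (i : 'I_(size S)) := dotp a S`_i <= b.
Let al (i : 'I_(size S)) := dotp a S`_i - b.
Let be (i : 'I_(size S)) := b - dotp a S`_i.
Let A := \sum_(j | ~~ L j) lam j * al j.
Let B := \sum_(i | L i) lam i * be i.

Let al_gt0 j : ~~ L j -> 0 < al j.
Proof. by rewrite subr_gt0 ltNge. Qed.

Let be_ge0 i : L i -> 0 <= be i.
Proof. by rewrite subr_ge0. Qed.

Let A_ge0 : 0 <= A.
Proof. by apply: sumr_ge0 => j /al_gt0 /ltW; exact: mulr_ge0. Qed.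

Let A_le_B : A <= B.
Proof.
suff AB : dotp a (\sum_i lam i *: S`_i) - b = A - B by rewrite -subr_le0 -AB subr_le0.
rewrite dotp_sumr -[b]mul1r -lam_sum mulr_suml -sumrB (bigID L) /= addrC -sumrN.
by congr (_ + _); apply: eq_bigr => i _; rewrite dotpZr /al /be; ring.
Qed.

Let sum_LU : \sum_i lam i *: S`_i =
  \sum_(i | L i) lam i *: S`_i + \sum_(j | ~~ L j) lam j *: S`_j.
Proof. by rewrite (bigID L). Qed.

Let lam_LU : \sum_(i | L i) lam i + \sum_(j | ~~ L j) lam j = 1.
Proof. by rewrite -lam_sum [RHS](bigID L). Qed.

Let below i : L i -> nncomb (cut_gens S a b) (lam i) (lam i *: S`_i).
Proof.
move=> Li; have SiS : S`_i \in cut_gens S a b by rewrite mem_cat mem_filter -/(L i) Li mem_nth.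
by have := nncombZ (lam_ge0 i) (nncomb_mem SiS); rewrite mulr1.
Qed.

Let cut_decomp_B0 : B = 0 -> nncomb (cut_gens S a b) 1 (\sum_i lam i *: S`_i).
Proof.
move=> B0; have lamU j : ~~ L j -> lam j = 0.
  move=> Lj; have A0 : A = 0 by apply/eqP; rewrite eq_le A_ge0 -B0 A_le_B.
  have := psumr_eq0P (fun j Lj => mulr_ge0 (lam_ge0 j) (ltW (al_gt0 Lj))) A0 Lj.
  by move/eqP; rewrite mulf_eq0 (gt_eqF (al_gt0 Lj)) orbF => /eqP.
rewrite sum_LU [X in _ + X]big1 ?addr0 => [|j /lamU ->]; last exact: scale0r.
rewrite -lam_LU [X in _ + X]big1 ?addr0 => [|j /lamU //].
exact: nncomb_sum.
Qed.

(* The weight above the cut is moved onto the crossing points with the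
   generators below it, in proportion to their slack [be]. *)
Let cut_decomp_B_gt0 : 0 < B -> nncomb (cut_gens S a b) 1 (\sum_i lam i *: S`_i).
Proof.
move=> B_gt0; have B_neq0 := lt0r_neq0 B_gt0.
pose kap i j := lam i * lam j / B * (al j + be i).
have kap_ge0 i j : L i -> ~~ L j -> 0 <= kap i j.
  move=> Li Lj; apply: mulr_ge0; first by rewrite divr_ge0 ?mulr_ge0 // ltW.
  by rewrite addr_ge0 ?be_ge0 // ltW // al_gt0.
have kapE i j : L i -> ~~ L j -> kap i j *: cut_point a b S`_i S`_j =
    (lam i * lam j / B) *: (al j *: S`_i + be i *: S`_j).
  move=> Li Lj; have d_neq0 : dotp a S`_j - dotp a S`_i != 0.
    by rewrite subr_eq0 gt_eqF // (le_lt_trans Li) // ltNge.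
  by apply/rowP => k; rewrite /kap /cut_point /al /be !mxE; field; rewrite B_neq0 d_neq0.
have cross := sum_cross_terms (L := L) (lam := lam) al (fun i => S`_i) B_neq0 (erefl B).
have cross_w := sum_cross_terms (L := L) (lam := lam) al (fun _ => 1 : R^o) B_neq0 (erefl B).
rewrite /GRing.scale /= in cross_w.
have y_split : \sum_i lam i *: S`_i = \sum_(i | L i) ((1 - A / B) * lam i) *: S`_i
    + \sum_(i | L i) \sum_(j | ~~ L j) kap i j *: cut_point a b S`_i S`_j.
  rewrite [X in _ + X](eq_bigr _ (fun i Li => eq_bigr _ (fun j Lj => kapE i j Li Lj))).
  rewrite cross -/A sum_LU addrA; congr (_ + _).
  rewrite scaler_sumr -big_split /=; apply: eq_bigr => i _.
  by rewrite scalerA -scalerDl; congr (_ *: _); ring.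
have w_split : \sum_(i | L i) (1 - A / B) * lam i
    + \sum_(i | L i) \sum_(j | ~~ L j) kap i j = 1.
  rewrite -[RHS]lam_LU -mulr_sumr.
  have -> : \sum_(i | L i) \sum_(j | ~~ L j) kap i j =
      \sum_(i | L i) \sum_(j | ~~ L j) lam i * lam j / B * (al j * 1 + be i * 1).
    by apply: eq_bigr => i _; apply: eq_bigr => j _; rewrite !mulr1.
  by rewrite cross_w -/A !(eq_bigr _ (fun i _ => mulr1 (lam i))); ring.
rewrite y_split -[X in nncomb _ X _]w_split; apply: nncombD.
  apply: nncomb_sum => i Li; rewrite -scalerA.
  by apply: nncombZ; [rewrite subr_ge0 ler_pdivrMr // mul1r | exact: below].
apply: nncomb_sum => i Li; apply: nncomb_sum => j Lj.
have SijS : cut_point a b S`_i S`_j \in cut_gens S a b.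
  rewrite mem_cat; apply/orP; right; apply: allpairs_f; rewrite mem_filter mem_nth // andbT.
    by rewrite -/(L i) Li.
  by rewrite ltNge -/(L j) Lj.
by have := nncombZ (kap_ge0 i j Li Lj) (nncomb_mem SijS); rewrite mulr1.
Qed.

Lemma nncomb_cut_of_below : nncomb (cut_gens S a b) 1 (\sum_i lam i *: S`_i).
Proof.
have B_ge0 : 0 <= B by apply: sumr_ge0 => i Li; rewrite mulr_ge0 ?be_ge0.
case: (eqVneq B 0) => [/cut_decomp_B0 // | B_neq0].
by apply: cut_decomp_B_gt0; rewrite lt_def B_neq0.
Qed.

End CutDecomposition.

Lemma nncomb_cut S a b y :
  nncomb S 1 y /\ dotp a y <= b <-> nncomb (cut_gens S a b) 1 y.
Proof.
split=> [[[lam [lam_ge0 [lam_sum ->]]] ay] | y_cut]; first exact: nncomb_cut_of_below.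
have gens x := @cut_gens_mem S a b x.
split; first by apply: nncomb_trans y_cut => x /gens [].
by rewrite -[b]mul1r; apply: (nncomb_dotp_le y_cut) => x /gens [].
Qed.

End Cut.

Section SimpleCone.
Variables (R : realFieldType) (n : nat).
Notation pt := 'rV[R]_n.
Implicit Types (z : pt) (K : pt -> Prop).

Lemma cone_at_indep K z m (r : 'I_m -> pt) : has_dim K m -> cone_at K z r -> indep r.
Proof.
move=> [[p [Kp p_indep]] _] z_cone; apply/indep_row_free; apply/eqP/anti_leq.
rewrite rank_leq_row /=; apply: (affindep_rank (z := z)) p_indep => i.
by have [mu [_ ->]] := z_cone _ (Kp i); exists mu.
Qed.

Lemma has_dim_of_cone K z m (r : 'I_m -> pt) (eps : 'I_m -> R) : K z -> indep r ->
  (forall k, 0 < eps k) -> (forall k, K (z + eps k *: r k)) -> cone_at K z r ->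
  has_dim K m.
Proof.
move=> Kz r_indep eps_gt0 K_steps z_cone; split.
  exists (affine_frame z (fun k => eps k *: r k)); split.
    by move=> i; rewrite /affine_frame; case: unlift.
  apply: affindep_frame => mu; under eq_bigr do rewrite scalerA.
  move=> /r_indep mu_eps k; move/eqP: (mu_eps k).
  by rewrite mulf_eq0 (gt_eqF (eps_gt0 k)) orbF => /eqP.
move=> [p [Kp p_indep]].
have p_span i : exists mu : 'I_m -> R, p i - z = \sum_j mu j *: r j.
  by have [mu [_ ->]] := z_cone _ (Kp i); exists mu.
by have := leq_trans (affindep_rank p_span p_indep) (rank_leq_row _); rewrite ltnn.
Qed.

Section ConeAtVertex.
Variables (K : pt -> Prop) (X : seq pt) (z : pt) (m : nat).
Variables (r : 'I_m -> pt) (eps : 'I_m -> R).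
Hypotheses (KX : forall y, K y <-> nncomb X 1 y) (vz : is_vertex K z) (r_indep : indep r).
Hypotheses (eps_gt0 : forall k, 0 < eps k) (K_steps : forall k, K (z + eps k *: r k)).
Hypothesis z_cone : cone_at K z r.

Lemma adjacent_along_cone_dir j : exists tau, eps j <= tau /\ adjacent K z (z + tau *: r j).
Proof.
have [c c_r] := indep_dual (fun k => - (k != j)%:R) r_indep.
have c_cone y mu : y - z = \sum_k mu k *: r k ->
    dotp c y - dotp c z = - \sum_k mu k * (k != j)%:R.
  move=> yE; rewrite -dotpBr yE dotp_sumr -sumrN.
  by apply: eq_bigr => k _; rewrite dotpZr c_r mulrN.
have c_max y : K y -> dotp c y <= dotp c z.
  move=> /z_cone [mu [mu_ge0 /c_cone]]; rewrite -subr_le0 => ->.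
  by rewrite oppr_le0 sumr_ge0 // => k _; rewrite mulr_ge0.
have c_ray y : K y -> dotp c y = dotp c z -> exists tau, y = z + tau *: r j.
  move=> /z_cone [mu [mu_ge0 yE]] cy; move: (c_cone y mu yE).
  rewrite cy subrr => /esym /eqP; rewrite oppr_eq0 => /eqP sum0.
  have := psumr_eq0P (fun k _ => mulr_ge0 (mu_ge0 k) (ler0n _ (k != j))) sum0.
  move=> term0; exists (mu j); rewrite -[y](subrK z) yE addrC (bigD1 j) //= big1 ?addr0 //.
  by move=> k kj; have /eqP := term0 k isT; rewrite kj mulr1 => /eqP ->; rewrite scale0r.
have crj : dotp c (r j) = 0 by rewrite c_r eqxx oppr0.
have [tau ? ?] := ray_face_adjacent KX vz c_max c_ray (indep_neq0 j r_indep) crj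
  (eps_gt0 j) (K_steps j).
by exists tau.
Qed.

Lemma simple_at_of_cone : simple_at K z.
Proof.
have [tau tau_spec] := ClassicalEpsilon.choice _ adjacent_along_cone_dir.
have tau_gt0 j : 0 < tau j := lt_le_trans (eps_gt0 j) (tau_spec j).1.
exists m; split; first exact: has_dim_of_cone (vertex_mem vz) r_indep eps_gt0 K_steps z_cone.
exists [seq z + tau j *: r j | j <- enum 'I_m]; split.
- rewrite map_inj_uniq ?enum_uniq // => i j /addrI tauE; apply/eqP/negPn/negP => ij.
  have := @r_indep (fun k => (k == i)%:R * tau i - (k == j)%:R * tau j).
  under eq_bigr do rewrite scalerBl.
  rewrite sumrB !sum_delta tauE subrr => /(_ erefl i).
  by rewrite eqxx (negbTE ij) mul0r subr0 mul1r => /eqP; rewrite gt_eqF.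
- by rewrite size_map size_enum_ord.
move=> u; split=> [nbr | /mapP [j _ ->]]; last exact: (tau_spec j).2.
have [j [nu [nu_gt0 uE]]] := adjacent_on_cone_ray r_indep eps_gt0 K_steps z_cone nbr.
apply/mapP; exists j; rewrite ?mem_enum // uE; congr (_ + _ *: _).
have [_ vu _ _] := nbr; have [_ vtau _ _] := (tau_spec j).2.
by apply: vertex_ray_uniq (vertex_mem vz) (indep_neq0 j r_indep) nu_gt0 (tau_gt0 j) _ _;
  rewrite -?uE.
Qed.

End ConeAtVertex.
End SimpleCone.

Section EdgeCut.
Variables (R : realFieldType) (n : nat).
Notation pt := 'rV[R]_n.
Implicit Types (p q y : pt).

Lemma small_step (x y dl : R) : 0 < dl ->
  exists2 e, 0 < e & [/\ e <= 1, e * x <= dl & e * y <= dl].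
Proof.
move=> dl_gt0; have D_gt0 : 0 < dl + `|x| + `|y| by rewrite -addrA ltr_pwDl // addr_ge0.
have e_le x' : `|x'| <= `|x| + `|y| -> dl / (dl + `|x| + `|y|) * x' <= dl.
  move=> x'_le; rewrite mulrAC ler_pdivrMr // ler_pM2l //.
  by have := ler_norm x'; lra.
exists (dl / (dl + `|x| + `|y|)); first exact: divr_gt0.
split; [|apply: e_le; rewrite lerDl | apply: e_le; rewrite lerDr] => //.
by rewrite ler_pdivrMr // mul1r -addrA lerDl addr_ge0.
Qed.

Lemma nncomb_tri (S : seq pt) (z p q : pt) (s t : R) :
  nncomb S 1 z -> nncomb S 1 (z + p) -> nncomb S 1 (z + q) ->
  0 <= s -> 0 <= t -> s + t <= 1 -> nncomb S 1 (z + s *: p + t *: q).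
Proof.
move=> hz hp hq s_ge0 t_ge0 st; have u_ge0 : 0 <= 1 - s - t by lra.
have := nncombD (nncombD (nncombZ u_ge0 hz) (nncombZ s_ge0 hp)) (nncombZ t_ge0 hq).
have -> : (1 - s - t) * 1 + s * 1 + t * 1 = 1 by ring.
by congr nncomb; apply/rowP => i; rewrite !mxE; ring.
Qed.

Variables (S : seq pt) (K : pt -> Prop) (z : pt) (m : nat) (d : 'I_m -> pt).
Variables (a : pt) (b : R).
Hypotheses (KS : forall y, K y <-> nncomb S 1 y) (Kz : K z) (d_indep : indep d).
Hypotheses (K_d : forall k, K (z + d k)) (z_cone : cone_at K z d) (az : dotp a z < b).

Let K' y := K y /\ dotp a y <= b.

Let K'S y : K' y <-> nncomb (cut_gens S a b) 1 y.
Proof. by rewrite -nncomb_cut; split=> [[/KS]|[/KS]]. Qed.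

Let K_tri k l s t : 0 <= s -> 0 <= t -> s + t <= 1 -> K (z + s *: d k + t *: d l).
Proof.
move=> s_ge0 t_ge0 st; apply/KS.
by apply: (@nncomb_tri S z (d k) (d l) s t); rewrite // -KS.
Qed.

Lemma cut_adjacent_dir u : adjacent K' z u -> exists t lam, 0 < lam /\ u = z + lam *: d t.
Proof.
have [eps eps_spec] : exists eps : 'I_m -> R, forall k, 0 < eps k /\ K' (z + eps k *: d k).
  apply: (ClassicalEpsilon.choice (fun k e => 0 < e /\ K' (z + e *: d k))) => k.
  have bz : 0 < b - dotp a z by rewrite subr_gt0.
  have [e e_gt0 [e_le1 e_a _]] := small_step (dotp a (d k)) 0 bz.
  exists e; split=> //; split.
    by have := K_tri k k (ltW e_gt0) (lexx 0); rewrite scale0r !addr0; apply.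
  by rewrite dotpDr dotpZr; lra.
apply: adjacent_on_cone_ray d_indep (fun k => (eps_spec k).1) (fun k => (eps_spec k).2) _.
by move=> y [Ky _]; exact: z_cone.
Qed.

Variables (t : 'I_m) (lam : R).
Hypotheses (lam_gt0 : 0 < lam) (lam_lt1 : lam < 1) (av : dotp a (z + lam *: d t) = b).

Let v := z + lam *: d t.
Let al := dotp a (d t).

Let al_gt0 : 0 < al.
Proof.
have : lam * al = b - dotp a z by move: av; rewrite dotpDr dotpZr => <-; rewrite addrC addKr.
by rewrite -(pmulr_rgt0 _ lam_gt0) => ->; rewrite subr_gt0.
Qed.

(* [r t = - d t] points back to [z]; for [k != t], [r k] is [d k] moved along [d t]
   into the hyperplane [a = 0]. *)
Let rho k := dotp a (d k) / al + (k == t)%:R.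
Let r k := d k - rho k *: d t.

Let rho_t : rho t = 2.
Proof. by rewrite /rho eqxx divff // gt_eqF. Qed.

Let a_r k : dotp a (r k) = - ((k == t)%:R * al).
Proof. by rewrite /r /rho dotpBr dotpZr -/al; field; rewrite gt_eqF. Qed.

Let sum_r (mu : 'I_m -> R) :
  \sum_k mu k *: r k = \sum_k mu k *: d k - (\sum_k mu k * rho k) *: d t.
Proof. by rewrite scaler_suml -sumrB; apply: eq_bigr => k _; rewrite scalerBr scalerA. Qed.

Let cut_dir_indep : indep r.
Proof.
move=> mu; rewrite sum_r; set c := \sum_k mu k * rho k => mu_r.
have /d_indep mu_d : \sum_k (mu k + (k == t)%:R * - c) *: d k = 0.
  by rewrite sum_shift scaleNr.
have mu_k k : k != t -> mu k = 0.
  by move=> kt; have := mu_d k; rewrite (negbTE kt) mul0r addr0.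
have mu_t : mu t = 0.
  have := mu_d t; rewrite eqxx mul1r /c (bigD1 t) //= big1 ?addr0 => [|k kt]; last first.
    by rewrite mu_k // mul0r.
  rewrite rho_t; lra.
by move=> k; case: (eqVneq k t) => [-> | /mu_k].
Qed.

Let cut_dir_steps : exists eps : 'I_m -> R, forall k, 0 < eps k /\ K' (v + eps k *: r k).
Proof.
apply: (ClassicalEpsilon.choice (fun k e => 0 < e /\ K' (v + e *: r k))) => k.
case: (eqVneq k t) => [-> | kt].
  exists lam; split=> //; have -> : v + lam *: r t = z.
    by apply/rowP => i; rewrite /v /r rho_t !mxE; ring.
  by split=> //; apply: ltW.
pose x1 := dotp a (d k) / al.
have dl_gt0 : 0 < Num.min lam (1 - lam) by rewrite lt_min lam_gt0 subr_gt0.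
have [e e_gt0 [_ e_x1 e_x2]] := small_step x1 (1 - x1) dl_gt0.
move: e_x1 e_x2; rewrite !le_min => /andP [e_x1 _] /andP [_ e_x2].
exists e; split=> //; split.
  have -> : v + e *: r k = z + (lam - e * x1) *: d t + e *: d k.
    by apply/rowP => i; rewrite /v /r /rho /x1 (negbTE kt) addr0 !mxE; ring.
  by apply: K_tri; [lra | exact: ltW | lra].
by rewrite dotpDr dotpZr a_r (negbTE kt) mul0r oppr0 mulr0 addr0 av.
Qed.

Let cut_dir_cone : cone_at K' v r.
Proof.
move=> y [Ky ay]; have [mu [mu_ge0 yE]] := z_cone Ky.
pose N := (b - dotp a y) / al.
have N_ge0 : 0 <= N by rewrite divr_ge0 ?subr_ge0 // ltW.
exists (fun k => mu k + (k == t)%:R * (N - mu t)); split.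
  move=> k; case: (eqVneq k t) => [-> | _]; last by rewrite mul0r addr0.
  by rewrite mul1r addrC subrK.
have a_y : dotp a y - dotp a z = \sum_k mu k * dotp a (d k).
  by rewrite -dotpBr yE dotp_sumr; apply: eq_bigr => k _; rewrite dotpZr.
have mu_rho : \sum_k mu k * rho k = (dotp a y - dotp a z) / al + mu t.
  rewrite (eq_bigr (fun k => mu k * dotp a (d k) / al + (k == t)%:R * mu k)) => [|k _].
    rewrite big_split /= -mulr_suml -a_y (bigD1 t) //= eqxx mul1r big1 ?addr0 //.
    by move=> k /negbTE ->; rewrite mul0r.
  by rewrite /rho; ring.
have rho_shift := sum_shift (V := R^o) mu rho t (N - mu t); rewrite /GRing.scale /= in rho_shift.
have hb : b = dotp a z + lam * al by rewrite -av dotpDr dotpZr.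
rewrite sum_r sum_shift rho_shift mu_rho rho_t -yE /v /N hb.
by apply/rowP => i; rewrite !mxE; field; rewrite gt_eqF.
Qed.

Lemma simple_at_cut_vertex : is_vertex K' v -> simple_at K' v.
Proof.
move=> vv; have [eps eps_spec] := cut_dir_steps.
exact: simple_at_of_cone K'S vv cut_dir_indep (fun k => (eps_spec k).1)
  (fun k => (eps_spec k).2) cut_dir_cone.
Qed.

End EdgeCut.

Theorem lemma2p15 (R : realFieldType) (n d : nat)
    (P : 'rV[R]_n -> Prop) (x : 'rV[R]_n) (T : 'rV[R]_n -> Prop)
    (a : 'rV[R]_n) (b : R) (w v : 'rV[R]_n) :
  is_polytope P -> has_dim P d ->
  is_vertex P x -> is_face P T -> T x ->
  (* truncation halfspace {y | a.y <= b} *)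
  a != 0 ->
  (forall t, is_vertex P t -> T t -> b < dotp a t) ->
  (forall u, is_vertex P u -> ~ T u -> dotp a u < b) ->
  let P' := fun y => P y /\ dotp a y <= b in
  let F := fun y => P' y /\ dotp a y = b in
  adjacent P x w -> ~ T w ->
  is_vertex P' v -> F v -> adjacent P' w v ->
  simple_at P w ->
  simple_at P' v.
Proof.
move=> [S PS] _ _ _ _ _ above below P' F xw wT vv [[Pv _] av] wv.
move=> [m [P_dim [l [_ sl w_nbrs]]]].
have vw : is_vertex P w by case: xw.
have Pw := vertex_mem vw; have aw := below w vw wT.
pose dd (k : 'I_(size l)) := l`_k - w.
have l_nbr (k : 'I_(size l)) : adjacent P w l`_k by apply/w_nbrs; rewrite mem_nth.
have P_dd k : P (w + dd k) by rewrite /dd addrC subrK; case: (l_nbr k) => _ /vertex_mem.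
have w_cone : cone_at P w dd := cone_at_neighbors PS vw w_nbrs.
have dd_indep : indep dd by apply: cone_at_indep w_cone; rewrite sl.
have [t [lam [lam_gt0 vE]]] := cut_adjacent_dir PS Pw dd_indep P_dd w_cone aw wv.
have lam_lt1 : lam < 1.
  have [_ vt wt _] := l_nbr t.
  apply: (vertex_ray_lt1 vt Pw Pv (fun e => wt (esym e)) _ lam_gt0 vE) => tv.
  move: av; rewrite -tv => av.
  by case: (classic (T l`_t)) => [/(above _ vt) | /(below _ vt)]; rewrite av ltxx.
rewrite vE in vv av *.
by apply: (simple_at_cut_vertex PS Pw dd_indep P_dd w_cone aw lam_gt0 lam_lt1 av vv).
Qed.
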